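(* (1) $H(1,0)\wedge H(1,0)\cong A(3\mid 0)$; (2) $H(0,1)\wedge H(0,1)\cong A(1\mid0)$; (3) for $m+n\ge2$, $H(m,n)\wedge H(m,n)\cong A(r\mid s)$ with $r=2m^2-m+\frac{n(n+1)}{2}$ and $s=2mn$; (4) $H_1\wedge H_1\cong A(1\mid 2)$; (5) for $m\ge2$, $H_m\wedge H_m\cong A(m^2\mid m^2)$.
   Context: All algebras are over a field $\mathbb{F}$ of characteristic $\neq 2,3$. $A(r\mid s)$ is the abelian Lie superalgebra of dimension $(r\mid s)$. $H(m,n)$ has even basis $x_1,\dots,x_{2m},z$, odd basis $y_1,\dots,y_n$, nonzero brackets $[x_i,x_{m+i}]=z$, $[y_j,y_j]=z$. $H_m$ has even basis $x_1,\dots,x_m$, odd basis $y_1,\dots,y_m,z$, nonzero brackets $[x_j,y_j]=z$. Non-abelian tensor square: $L\otimes L$ is the Lie superalgebra generated by symbols $x\otimes y$ ($x,y$ homogeneous, $|x\otimes y|=|x|+|y|$) subject to bilinearity, $[x,x']\otimes y=x\otimes[x',y]-(-1)^{|x||x'|}x'\otimes[x,y]$, $x\otimes[y,y']=(-1)^{|y'|(|x|+|y|)}[y',x]\otimes y-(-1)^{|x||y|}[y,x]\otimes y'$, and $[x\otimes y,x'\otimes y']=-(-1)^{|x||y|}[y,x]\otimes[x',y']$. The exterior square is $L\wedge L=(L\otimes L)/(L\square L)$, where $L\square L$ is the graded ideal generated by $x\otimes y+(-1)^{|x||y|}y\otimes x$ for homogeneous $x,y$ and by $x_0\otimes x_0$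 for $x_0\in L_{\bar 0}$. *)

From HB Require Import structures.
From mathcomp Require Import all_boot all_order all_algebra.
Set Implicit Arguments. Unset Strict Implicit. Unset Printing Implicit Defensive.
Import GRing.Theory.
Local Open Scope ring_scope.

(* A (candidate) Lie superalgebra over F: an F-vector space together with a
   Z/2-grading, given by the predicates [lsa_hom false] (even part) and
   [lsa_hom true] (odd part), and a bracket. *)
Record lsa (F : fieldType) := LSA {
  lsa_car : lmodType F;
  lsa_hom : bool -> lsa_car -> Prop;
  lsa_br  : lsa_car -> lsa_car -> lsa_car
}.
Arguments LSA {F}.
Arguments lsa_car {F} l.
Arguments lsa_hom {F} l.
Arguments lsa_br {F} l.

Definition sgn (F : fieldType) (b : bool) : F := (-1) ^+ b.

Definition is_lsa (F : fieldType) (L : lsa F) : Prop :=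
  let hom := lsa_hom L in let br := lsa_br L in
  (forall a, hom a 0) /\
  (forall a (c : F) x y, hom a x -> hom a y -> hom a (c *: x + y)) /\
  (forall x, exists x0 x1, [/\ hom false x0, hom true x1 & x = x0 + x1]) /\
  (forall x, hom false x -> hom true x -> x = 0) /\
  (forall (c : F) x y z, br (c *: x + y) z = c *: br x z + br y z) /\
  (forall (c : F) x y z, br z (c *: x + y) = c *: br z x + br z y) /\
  (forall a b x y, hom a x -> hom b y -> hom (a (+) b) (br x y)) /\
  (forall a b x y, hom a x -> hom b y ->
     br x y = - (sgn F (a && b) *: br y x)) /\
  (forall a b c x y z, hom a x -> hom b y -> hom c z ->
     sgn F (a && c) *: br x (br y z) + sgn F (b && a) *: br y (br z x)
     + sgn F (c && b) *: br z (br x y) = 0).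

Definition lsa_morph (F : fieldType) (L M : lsa F)
  (f : lsa_car L -> lsa_car M) : Prop :=
  (forall (c : F) x y, f (c *: x + y) = c *: f x + f y) /\
  (forall a x, lsa_hom L a x -> lsa_hom M a (f x)) /\
  (forall x y, f (lsa_br L x y) = lsa_br M (f x) (f y)).

Definition lsa_iso (F : fieldType) (L M : lsa F) : Prop :=
  exists f : lsa_car L -> lsa_car M, lsa_morph f /\ bijective f.

(* A map w : L x L -> M (w x y standing for the image of the generator x /\ y)
   satisfying all the defining relations of the exterior square L /\ L:
   bilinearity, |x /\ y| = |x| + |y|, the three relations of the non-abelian
   tensor square, and the relations generating L [] L. *)
Definition ext_pairing (F : fieldType) (L M : lsa F)
  (w : lsa_car L -> lsa_car L -> lsa_car M) : Prop :=
  let hom := lsa_hom L in let br := lsa_br L in let brM := lsa_br M in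
  (forall (c : F) x y z, w (c *: x + y) z = c *: w x z + w y z) /\
  (forall (c : F) x y z, w z (c *: x + y) = c *: w z x + w z y) /\
  (forall a b x y, hom a x -> hom b y -> lsa_hom M (a (+) b) (w x y)) /\
  (forall a a' b x x' y, hom a x -> hom a' x' -> hom b y ->
     w (br x x') y = w x (br x' y) - sgn F (a && a') *: w x' (br x y)) /\
  (forall a b b' x y y', hom a x -> hom b y -> hom b' y' ->
     w x (br y y') = sgn F (b' && (a (+) b)) *: w (br y' x) y
                     - sgn F (a && b) *: w (br y x) y') /\
  (forall a b a' b' x y x' y', hom a x -> hom b y -> hom a' x' -> hom b' y' ->
     brM (w x y) (w x' y') = - (sgn F (a && b) *: w (br y x) (br x' y'))) /\
  (forall a b x y, hom a x -> hom b y -> w x y + sgn F (a && b) *: w y x = 0) /\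
  (forall x, hom false x -> w x x = 0).

(* (E, w) is the exterior square of L: the Lie superalgebra presented by the
   generators x /\ y and the relations above (universal property). *)
Definition ext_universal (F : fieldType) (L E : lsa F)
  (w : lsa_car L -> lsa_car L -> lsa_car E) : Prop :=
  ext_pairing w /\
  forall (M : lsa F), is_lsa M ->
  forall w' : lsa_car L -> lsa_car L -> lsa_car M, ext_pairing w' ->
  exists f : lsa_car E -> lsa_car M,
    (lsa_morph f /\ forall x y, f (w x y) = w' x y) /\
    (forall g : lsa_car E -> lsa_car M,
       lsa_morph g -> (forall x y, g (w x y) = w' x y) -> forall e, f e = g e).

Arguments ext_universal {F} L E w.

(* "L /\ L is isomorphic to A": the exterior square exists and is realized on A,
   and every exterior square of L is isomorphic to A. *)
Definition ext_square_iso (F : fieldType) (L A : lsa F) : Prop :=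
  (exists w, ext_universal L A w) /\
  (forall (E : lsa F) w, is_lsa E -> ext_universal L E w -> lsa_iso E A).

(* i-th coordinate of a row vector (0 outside the range) *)
Definition coord (F : fieldType) (k : nat) (v : 'rV[F]_k) (i : nat) : F :=
  if (insub i : option 'I_k) is Some j then v 0 j else 0.

Definition ebasis (F : fieldType) (k : nat) (i : nat) : 'rV[F]_k :=
  \row_(j < k) (if (j : nat) == i then 1 else 0).

Definition coord_lsa (F : fieldType) (k : nat) (p : 'I_k -> bool)
  (br : 'rV[F]_k -> 'rV[F]_k -> 'rV[F]_k) : lsa F :=
  LSA ('rV[F]_k : lmodType F)
      (fun a v => forall i : 'I_k, p i != a -> v 0 i = 0) br.

(* A(r|s): abelian, basis e_0..e_{r-1} even, e_r..e_{r+s-1} odd *)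
Definition Aab (F : fieldType) (r s : nat) : lsa F :=
  coord_lsa (fun i : 'I_(r + s) => (r <= i)%N) (fun _ _ => 0).

(* H(m,n): coordinates 0..2m-1 = x_1..x_{2m} (even), 2m = z (even),
   2m+1..2m+n = y_1..y_n (odd);  [x_i,x_{m+i}] = z, [y_j,y_j] = z. *)
Definition Hmn (F : fieldType) (m n : nat) : lsa F :=
  coord_lsa (fun i : 'I_(2 * m + 1 + n) => (2 * m < i)%N)
    (fun u v =>
       (\sum_(i < m) (coord u i * coord v (m + i)%N - coord u (m + i)%N * coord v i)
        + \sum_(j < n) coord u (2 * m + 1 + j)%N * coord v (2 * m + 1 + j)%N)
       *: ebasis F (2 * m + 1 + n) (2 * m)%N).

(* H_m: coordinates 0..m-1 = x_1..x_m (even), m..2m-1 = y_1..y_m (odd),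
   2m = z (odd);  [x_j,y_j] = z. *)
Definition Hm (F : fieldType) (m : nat) : lsa F :=
  coord_lsa (fun i : 'I_(2 * m + 1) => (m <= i)%N)
    (fun u v =>
       (\sum_(j < m) (coord u j * coord v (m + j)%N - coord u (m + j)%N * coord v j))
       *: ebasis F (2 * m + 1) (2 * m)%N).

From Pilot Require Import Defs.
From HB Require Import structures.
From mathcomp Require Import all_boot all_order all_algebra.
From mathcomp Require Import ring zify.
Import GRing.Theory.
Set Implicit Arguments. Unset Strict Implicit. Unset Printing Implicit Defensive.
Local Open Scope ring_scope.

(* Every algebra L considered is F^K with homogeneous basis e_0..e_{K-1} and a
   bracket [u,v] = B(u,v) e_z taking values in the line of one basis vector.
   1. Exterior squares, being defined by a universal property, are unique up
      to isomorphism; so it suffices to exhibit one universal exterior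
      pairing with values in A(r|s) (ext_square_of_universal).
   2. Given a list S of r+s index pairs, the coordinate pairing [wedge] sends
      e_l, e_l' to the basis vector of the position of (l,l') in S (or to
      -(-1)^{|l||l'|} times that of (l',l)).  It is universal as soon as the
      relations force e_l /\ e_l' = 0 for all pairs outside S and [wedge] itself
      satisfies the two non-abelian tensor relations (wedge_ext_square).
   3. For Heisenberg-type algebras with even x's and odd y's, S is formed by
      x_i /\ x_j (i < j), y_a /\ y_b (a <= b), x_i /\ y_b, and it suffices that
      z /\ L = 0; when z is neither an x nor a y the tensor relations are
      automatic (heis_ext_square, heis_ext_square_center_free).
   4. z /\ e_v = 0 follows from writing z = [a,a'] with a, a' commuting with
      e_v (wedge_zero_bracket); this covers H(m,n), m + n >= 2, and H_m,
      m >= 2.  The small algebras H(1,0), H(0,1), H_1 are treated by hand;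
      the first and last need a direct check of the tensor relations in
      dimension 3, and H(0,1) uses char F <> 3.  The theorem collects the five
      cases. *)

Section LinearPreliminaries.
Variable F : fieldType.

Lemma sgn_sq (b : bool) : sgn F b * sgn F b = 1.
Proof. by case: b; rewrite /sgn ?expr1 ?expr0 ?mulN1r ?opprK ?mulr1. Qed.

Lemma sgnF : sgn F false = 1. Proof. by rewrite /sgn expr0. Qed.
Lemma sgnT : sgn F true = -1. Proof. by rewrite /sgn expr1. Qed.

Definition islinear (V W : lmodType F) (f : V -> W) : Prop :=
  forall (c : F) x y, f (c *: x + y) = c *: f x + f y.

Section Linear.
Variables (V W : lmodType F) (f : V -> W).
Hypothesis f_lin : islinear f.

Lemma islinear0 : f 0 = 0.
Proof.
have := f_lin 1 0 0; rewrite !scale1r addr0 => h.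
by apply: (@addrI _ (f 0)); rewrite addr0 -h.
Qed.

Lemma islinearZ c x : f (c *: x) = c *: f x.
Proof. by rewrite -(addr0 (c *: x)) f_lin islinear0 addr0. Qed.

Lemma islinear_sum (I : finType) (c : I -> F) (x : I -> V) :
  f (\sum_i c i *: x i) = \sum_i c i *: f (x i).
Proof.
apply: (big_rec2 (fun a b => f b = a)); first exact: islinear0.
by move=> i y1 y2 _ <-; rewrite f_lin.
Qed.

End Linear.

Lemma ebasisE k (i : nat) (j : 'I_k) : ebasis F k i 0 j = ((j : nat) == i)%:R.
Proof. by rewrite mxE; case: eqP. Qed.

Lemma ebasis_ne k (i : nat) (j : 'I_k) : (j : nat) != i -> ebasis F k i 0 j = 0.
Proof. by move=> H; rewrite ebasisE (negbTE H). Qed.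

Lemma ebasis_eq k (j : 'I_k) : ebasis F k j 0 j = 1.
Proof. by rewrite ebasisE eqxx. Qed.

Lemma row_expand k (v : 'rV[F]_k) : v = \sum_(i < k) v 0 i *: ebasis F k i.
Proof.
apply/rowP => j; rewrite summxE (bigD1 j) //= big1 => [|i ij].
  by rewrite mxE ebasis_eq mulr1 addr0.
by rewrite mxE ebasis_ne ?mulr0 // eq_sym.
Qed.

Lemma coordE k (v : 'rV[F]_k) i (H : (i < k)%N) : Defs.coord v i = v 0 (Ordinal H).
Proof. by rewrite /Defs.coord insubT. Qed.

Lemma coord_ebasis k (a i : nat) :
  Defs.coord (ebasis F k a) i = ((i < k)%N && (i == a))%:R.
Proof.
case: (ltnP i k) => H; first by rewrite (coordE _ H) ebasisE.
by rewrite /Defs.coord insubF ?ltnNge ?H.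
Qed.

Lemma boolR_mul (b1 b2 : bool) : (b1%:R * b2%:R : F) = (b1 && b2)%:R.
Proof. by case: b1; case: b2; rewrite ?mul1r ?mul0r. Qed.

End LinearPreliminaries.

Section ExteriorPairings.
Variables (F : fieldType) (L M : lsa F) (w : lsa_car L -> lsa_car L -> lsa_car M).
Local Notation hom := (lsa_hom L).
Local Notation br := (lsa_br L).

Definition left_bracket_rel : Prop :=
  forall a a' b x x' y, hom a x -> hom a' x' -> hom b y ->
     w (br x x') y = w x (br x' y) - sgn F (a && a') *: w x' (br x y).

Definition right_bracket_rel : Prop :=
  forall a b b' x y y', hom a x -> hom b y -> hom b' y' ->
     w x (br y y') = sgn F (b' && (a (+) b)) *: w (br y' x) y
                     - sgn F (a && b) *: w (br y x) y'.

Hypothesis hw : ext_pairing w.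

Lemma pairing_linl v : islinear (fun x => w x v).
Proof. by case: hw => h _ c x y; apply: h. Qed.

Lemma pairing_linr v : islinear (w v).
Proof. by case: hw => _ [h _] c x y; apply: h. Qed.

Lemma pairing_hom a b x y : hom a x -> hom b y -> lsa_hom M (a (+) b) (w x y).
Proof. by case: hw => _ [_ [h _]]; apply: h. Qed.

Lemma pairing_left : left_bracket_rel.
Proof. by case: hw => _ [_ [_ [h _]]]. Qed.

Lemma pairing_right : right_bracket_rel.
Proof. by case: hw => _ [_ [_ [_ [h _]]]]. Qed.

Lemma pairing_bracket a b a' b' x y x' y' :
  hom a x -> hom b y -> hom a' x' -> hom b' y' ->
  lsa_br M (w x y) (w x' y') = - (sgn F (a && b) *: w (br y x) (br x' y')).
Proof. by case: hw => _ [_ [_ [_ [_ [h _]]]]]; apply: h. Qed.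

Lemma pairing_anti a b x y : hom a x -> hom b y -> w x y + sgn F (a && b) *: w y x = 0.
Proof. by case: hw => _ [_ [_ [_ [_ [_ [h _]]]]]]; apply: h. Qed.

Lemma pairing_even_diag x : hom false x -> w x x = 0.
Proof. by case: hw => _ [_ [_ [_ [_ [_ [_ h]]]]]]; apply: h. Qed.

End ExteriorPairings.

Definition wedge_zero (F : fieldType) (L : lsa F) (x y : lsa_car L) : Prop :=
  forall (M : lsa F) (w : lsa_car L -> lsa_car L -> lsa_car M), ext_pairing w -> w x y = 0.

(* If z = [a,a'] where a and a' commute with v, then z /\ v = 0:
   by the first tensor relation z /\ v = a /\ [a',v] +- a' /\ [a,v]. *)
Lemma wedge_zero_bracket (F : fieldType) (L : lsa F) (ta ta' tv : bool)
    (a a' v : lsa_car L) :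
  lsa_hom L ta a -> lsa_hom L ta' a' -> lsa_hom L tv v ->
  lsa_br L a' v = 0 -> lsa_br L a v = 0 -> wedge_zero (lsa_br L a a') v.
Proof.
move=> ha ha' hv h1 h2 M w hw.
rewrite (pairing_left hw ha ha' hv) h1 h2.
by rewrite !(islinear0 (pairing_linr hw _)) scaler0 subrr.
Qed.

Section Universality.
Variable F : fieldType.

Lemma morph_comp (L M N : lsa F) (f : lsa_car L -> lsa_car M) (g : lsa_car M -> lsa_car N) :
  lsa_morph f -> lsa_morph g -> lsa_morph (g \o f).
Proof.
move=> [f1 [f2 f3]] [g1 [g2 g3]]; split; last split.
- by move=> c x y /=; rewrite f1 g1.
- by move=> a x Hx /=; apply: g2; apply: f2.
- by move=> x y /=; rewrite f3 g3.
Qed.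

Lemma morph_id (L : lsa F) : lsa_morph (@id (lsa_car L)).
Proof. by split; last split. Qed.

Lemma universal_endo_id (L E : lsa F) w (h : lsa_car E -> lsa_car E) :
  is_lsa E -> ext_universal L E w -> lsa_morph h -> (forall x y, h (w x y) = w x y) ->
  forall e, h e = e.
Proof.
move=> lE [pE uE] mh hw e.
have [f [_ uf]] := uE E lE w pE.
by rewrite -(uf _ mh hw) (uf _ (morph_id E)).
Qed.

Lemma universal_iso (L E A : lsa F) wE wA :
  is_lsa E -> is_lsa A -> ext_universal L E wE -> ext_universal L A wA -> lsa_iso E A.
Proof.
move=> lE lA UE UA; have [pE uE] := UE; have [pA uA] := UA.
have [f [[mf fw] _]] := uE A lA wA pA.
have [g [[mg gw] _]] := uA E lE wE pE.
exists f; split => //; exists g => x.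
- by apply: (universal_endo_id lE UE (morph_comp mf mg)) => x' y' /=; rewrite fw gw.
- by apply: (universal_endo_id lA UA (morph_comp mg mf)) => x' y' /=; rewrite gw fw.
Qed.

Lemma is_lsa_abelian k (p : 'I_k -> bool) :
  is_lsa (coord_lsa p (fun _ _ => (0 : 'rV[F]_k))).
Proof.
split; first by move=> a i _; rewrite mxE.
split; first by move=> a c x y Hx Hy i Hi; rewrite !mxE Hx // Hy // mulr0 addr0.
split.
  move=> x; exists (\row_i if p i then 0 else x 0 i), (\row_i if p i then x 0 i else 0).
  split; try by move=> i; rewrite mxE; case: (p i).
  by apply/rowP => i; rewrite !mxE; case: (p i); rewrite ?add0r ?addr0.
split.
  move=> x H0 H1; apply/rowP => i; rewrite mxE.
  by case E: (p i); [apply: H0 | apply: H1]; rewrite E.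
split; first by move=> *; rewrite scaler0 addr0.
split; first by move=> *; rewrite scaler0 addr0.
split; first by move=> a b x y _ _ i _; rewrite mxE.
split; first by move=> *; rewrite scaler0 oppr0.
by move=> *; rewrite !scaler0 !addr0.
Qed.

Lemma ext_square_of_universal (L : lsa F) r s w :
  ext_universal L (Aab F r s) w -> ext_square_iso L (Aab F r s).
Proof.
move=> U; split; first by exists w.
by move=> E w' lE UE; apply: universal_iso lE (is_lsa_abelian _) UE U.
Qed.

End Universality.

(* The pairing attached to a list S of index pairs: e_l /\ e_l' is sent to the
   basis vector of the position of (l,l') in S, or to -(-1)^{|l||l'|} times
   that of (l',l), or to 0.  It is universal under the conditions below. *)
Section CoordinateWedge.
Variables (F : fieldType) (K : nat) (p : 'I_K -> bool).
Variable br : 'rV[F]_K -> 'rV[F]_K -> 'rV[F]_K.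
Variables (r s : nat) (S : seq (nat * nat)).

Local Notation L := (coord_lsa p br).
Local Notation A := (Aab F r s).
Local Notation E := (ebasis F K).

Definition wcoef (k : nat) (l l' : 'I_K) : F :=
  if ((l : nat), (l' : nat)) == nth (0,0)%N S k then 1
  else if (((l' : nat), (l : nat)) == nth (0,0)%N S k) && (l != l')
       then - sgn F (p l && p l') else 0.

Definition wedge (u v : lsa_car L) : lsa_car A :=
  \row_(k < r + s) \sum_(l < K) \sum_(l' < K)
     wcoef k l l' * ((u : 'rV[F]_K) 0 l * (v : 'rV[F]_K) 0 l').

Definition pair_image (M : lsa F) (w : lsa_car L -> lsa_car L -> lsa_car M) (k : nat) :=
  w (E (nth (0,0)%N S k).1) (E (nth (0,0)%N S k).2).

Lemma hom_ebasis (i : 'I_K) : lsa_hom L (p i) (E i).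
Proof.
move=> j Hj; rewrite ebasisE; case: eqP => // /ord_inj ji.
by move: Hj; rewrite ji eqxx.
Qed.

Lemma bilinear_expand (V : lmodType F) (w : 'rV[F]_K -> 'rV[F]_K -> V) :
  (forall v, islinear (fun x => w x v)) -> (forall v, islinear (w v)) ->
  forall u v, w u v = \sum_(l < K) \sum_(l' < K) (u 0 l * v 0 l') *: w (E l) (E l').
Proof.
move=> wl wr u v; rewrite {1}(row_expand u) (islinear_sum (wl v)).
apply: eq_bigr => l _; rewrite {1}(row_expand v) (islinear_sum (wr _)).
by rewrite scaler_sumr; apply: eq_bigr => l' _; rewrite scalerA.
Qed.

Hypothesis S_size : size S = (r + s)%N.
Hypothesis S_uniq : uniq S.
Hypothesis S_homog : forall k : 'I_(r + s), exists i j : 'I_K,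
  [/\ nth (0,0)%N S k = ((i : nat), (j : nat)), p i (+) p j = (r <= k)%N
    & ((i : nat) = j -> p i)].
Hypothesis S_asym : forall i j : nat, i != j -> (i, j) \in S -> (j, i) \notin S.

Lemma nth_S_in (k : 'I_(r + s)) : nth (0,0)%N S k \in S.
Proof. by rewrite mem_nth // S_size. Qed.

Lemma index_S_eq (k : 'I_(r + s)) q : q \in S ->
  (q == nth (0,0)%N S k) = ((k : nat) == index q S).
Proof.
move=> qS; apply/eqP/eqP => [-> | ->]; last by rewrite nth_index.
by rewrite index_uniq // S_size.
Qed.

Lemma wcoef_in (k : 'I_(r + s)) (l l' : 'I_K) : ((l : nat), (l' : nat)) \in S ->
  wcoef k l l' = ((k : nat) == index ((l : nat), (l' : nat)) S)%:R.
Proof.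
move=> H; rewrite /wcoef index_S_eq //; case: eqP => //= _.
case: eqP => [e | _]; last by rewrite andFb.
case: (eqVneq l l') => [<- | ll']; first by [].
by move: (S_asym ll' H); rewrite e nth_S_in.
Qed.

Lemma wcoef_rev (k : 'I_(r + s)) (l l' : 'I_K) : ((l : nat), (l' : nat)) \notin S ->
  ((l' : nat), (l : nat)) \in S ->
  wcoef k l l' = ((k : nat) == index ((l' : nat), (l : nat)) S)%:R * - sgn F (p l && p l').
Proof.
move=> H H'; rewrite /wcoef.
case: eqP => [e | _]; first by move: H; rewrite e nth_S_in.
have -> : l != l' by apply: contraNneq H => ll; move: H'; rewrite ll.
by rewrite andbT index_S_eq //; case: eqP; rewrite ?mul1r ?mul0r.
Qed.

Lemma wcoef_out (k : 'I_(r + s)) (l l' : 'I_K) : ((l : nat), (l' : nat)) \notin S ->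
  ((l' : nat), (l : nat)) \notin S -> wcoef k l l' = 0.
Proof.
move=> H H'; rewrite /wcoef.
case: eqP => [e | _]; first by move: H; rewrite e nth_S_in.
by case: eqP => [e | _] //; move: H'; rewrite e nth_S_in.
Qed.

Lemma wcoef_parity (k : 'I_(r + s)) (l l' : 'I_K) :
  wcoef k l l' != 0 -> p l (+) p l' = (r <= k)%N.
Proof.
have [i [j [e pij _]]] := S_homog k.
rewrite /wcoef e; case: (((l : nat), (l' : nat)) =P ((i : nat), (j : nat))) => [[= a b] _ |_].
  by rewrite (ord_inj a) (ord_inj b).
case: (((l' : nat), (l : nat)) =P ((i : nat), (j : nat))) => [[= a b] _ | _].
  by rewrite (ord_inj a) (ord_inj b) addbC.
by rewrite eqxx.
Qed.

Lemma wcoef_anti (k : 'I_(r + s)) (l l' : 'I_K) :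
  wcoef k l l' + sgn F (p l && p l') * wcoef k l' l = 0.
Proof.
have [i [j [e pij dg]]] := S_homog k.
rewrite /wcoef e.
case: (eqVneq l l') => [<- | ll'].
  rewrite andbF; case: eqP => [[= /ord_inj li b] | _]; last by rewrite mulr0 addr0.
  have pl : p l by rewrite li; apply: dg; rewrite -li b.
  by rewrite andbb pl sgnT mulr1 subrr.
rewrite /= !andbT.
case: eqP => [[= a b] | na]; case: eqP => [[= c d] | nc].
- by move: ll'; rewrite (val_inj (etrans a (esym c))) eqxx.
- by rewrite andbC mulrN sgn_sq subrr.
- by rewrite mulr1 andbC addrC subrr.
- by rewrite mulr0 addr0.
Qed.

Lemma wedge_ebasis (i j : 'I_K) : wedge (E i) (E j) = \row_(k < r + s) wcoef k i j.
Proof.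
apply/rowP => k; rewrite !mxE (bigD1 i) //= [X in _ + X]big1 ?addr0 => [|l li].
  rewrite (bigD1 j) //= [X in _ + X]big1 ?addr0 => [|l' lj].
    by rewrite !ebasis_eq !mulr1.
  by rewrite (@ebasis_ne F _ _ l') ?mulr0.
by apply: big1 => l' _; rewrite (@ebasis_ne F _ _ l) ?mul0r ?mulr0.
Qed.

Lemma ebasis_pair_image (k : 'I_(r + s)) : ebasis F (r + s) k = pair_image wedge k.
Proof.
have [i [j [e _ _]]] := S_homog k.
rewrite /pair_image e /= wedge_ebasis; apply/rowP => k'; rewrite !mxE wcoef_in -e ?nth_S_in //.
by rewrite index_uniq ?S_size //; case: eqP.
Qed.

Lemma wedge_linl v : islinear (fun x => wedge x v).
Proof.
move=> c x y; apply/rowP => k; rewrite !mxE mulr_sumr -big_split /=; apply: eq_bigr => l _.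
by rewrite mulr_sumr -big_split /=; apply: eq_bigr => l' _; rewrite !mxE /=; ring.
Qed.

Lemma wedge_linr v : islinear (wedge v).
Proof.
move=> c x y; apply/rowP => k; rewrite !mxE mulr_sumr -big_split /=; apply: eq_bigr => l _.
by rewrite mulr_sumr -big_split /=; apply: eq_bigr => l' _; rewrite !mxE /=; ring.
Qed.

Lemma wedge_hom a b x y :
  lsa_hom L a x -> lsa_hom L b y -> lsa_hom A (a (+) b) (wedge x y).
Proof.
move=> Hx Hy k Hk; rewrite mxE; apply: big1 => l _; apply: big1 => l' _.
case: (eqVneq (p l) a) => pl; last by rewrite (Hx l) ?pl // mul0r mulr0.
case: (eqVneq (p l') b) => pl'; last by rewrite (Hy l') ?pl' // mulr0 mulr0.
case: (eqVneq (wcoef k l l') 0) => [-> | /wcoef_parity]; first by rewrite mul0r.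
by rewrite pl pl' => h; move: Hk; rewrite /= h eqxx.
Qed.

(* the entries of wedge x y + sgn *: wedge y x pair up into wcoef_anti sums *)
Lemma wedge_anti_sum a b x y (c : F) (k : 'I_(r + s)) :
  lsa_hom L a x -> lsa_hom L b y -> c = sgn F (a && b) ->
  \sum_(l < K) \sum_(l' < K) (wcoef k l l' * (x 0 l * y 0 l') + c * (wcoef k l' l * (x 0 l * y 0 l'))) = 0.
Proof.
move=> Hx Hy ->; apply: big1 => l _; apply: big1 => l' _.
case: (eqVneq (p l) a) => pl; last by rewrite (Hx l) ?pl // !(mul0r, mulr0) addr0.
case: (eqVneq (p l') b) => pl'; last by rewrite (Hy l') ?pl' // !(mul0r, mulr0) addr0.
have := wcoef_anti k l l'; rewrite pl pl' => h.
transitivity ((wcoef k l l' + sgn F (a && b) * wcoef k l' l) * (x 0 l * y 0 l')); first by ring.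
by rewrite h mul0r.
Qed.

Lemma wedge_anti a b x y : lsa_hom L a x -> lsa_hom L b y ->
  wedge x y + sgn F (a && b) *: wedge y x = 0.
Proof.
move=> Hx Hy; apply/rowP => k; rewrite !mxE [X in _ + _ * X]exchange_big /=.
rewrite mulr_sumr -big_split /= -[RHS](wedge_anti_sum k Hx Hy (erefl _)).
apply: eq_bigr => l _; rewrite mulr_sumr -big_split /=.
by apply: eq_bigr => l' _; rewrite [y 0 l' * _]mulrC.
Qed.

(* characteristic 2 is excluded: x /\ x = 0 for even x *)
Lemma wedge_even_diag (hF2 : (2%:R : F) != 0) x : lsa_hom L false x -> wedge x x = 0.
Proof.
move=> Hx; apply/rowP => k; rewrite !mxE.
have /eqP : (\sum_(l < K) \sum_(l' < K) wcoef k l l' * (x 0 l * x 0 l')) *+ 2 = 0.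
  rewrite -[RHS](wedge_anti_sum k Hx Hx (esym (sgnF F))) mulr2n.
  rewrite [X in _ + X]exchange_big -big_split /=; apply: eq_bigr => l _.
  by rewrite -big_split /=; apply: eq_bigr => l' _; rewrite mul1r [x 0 l' * _]mulrC.
by rewrite -mulr_natr mulf_eq0 (negbTE hF2) orbF => /eqP.
Qed.

Lemma pairing_pair_expand (M : lsa F) (w : lsa_car L -> lsa_car L -> lsa_car M)
    (l l' : 'I_K) :
  ext_pairing w ->
  (((l : nat), (l' : nat)) \notin S -> ((l' : nat), (l : nat)) \notin S -> w (E l) (E l') = 0) ->
  \sum_(k < r + s) wcoef k l l' *: pair_image w k = w (E l) (E l').
Proof.
move=> hw Hdead.
have pick q : q \in S -> exists k0 : 'I_(r + s), (k0 : nat) = index q S.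
  move=> qS; have k0S : (index q S < r + s)%N by rewrite -S_size index_mem.
  by exists (Ordinal k0S).
have sum1 q (c : F) : q \in S -> (forall k : 'I_(r + s), wcoef k l l' = ((k : nat) == index q S)%:R * c) ->
    \sum_(k < r + s) wcoef k l l' *: pair_image w k = c *: pair_image w (index q S).
  move=> qS hc; have [k0 hk0] := pick q qS.
  rewrite (bigD1 k0) //= big1 ?addr0 => [|k kk0]; first by rewrite hc hk0 eqxx mul1r.
  rewrite hc -hk0 (_ : ((k : nat) == k0) = false) ?mul0r ?scale0r //.
  by apply/negbTE; apply: contra kk0 => /eqP e; apply/eqP/ord_inj.
case: (boolP (((l : nat), (l' : nat)) \in S)) => H.
  rewrite (sum1 _ 1 H) ?scale1r ?/pair_image ?nth_index // => k.
  by rewrite wcoef_in // mulr1.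
case: (boolP (((l' : nat), (l : nat)) \in S)) => H'; last first.
  by rewrite Hdead // big1 // => k _; rewrite wcoef_out // scale0r.
rewrite (sum1 _ (- sgn F (p l && p l')) H') => [|k]; last exact: wcoef_rev.
rewrite /pair_image nth_index //=.
move/eqP: (pairing_anti hw (hom_ebasis (i := l')) (hom_ebasis (i := l))); rewrite addr_eq0 => /eqP ->.
by rewrite scaleNr scalerN opprK scalerA andbC sgn_sq scale1r.
Qed.

Variables (z : 'I_K) (B : 'rV[F]_K -> 'rV[F]_K -> F).
Hypothesis br_center : forall u v, br u v = B u v *: E z.
Hypothesis S_center : ((z : nat), (z : nat)) \notin S.

Lemma wedge_bracket u v u' v' : wedge (br u v) (br u' v') = 0.
Proof.
rewrite !br_center (islinearZ (wedge_linl _)) (islinearZ (wedge_linr _)) wedge_ebasis.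
rewrite (_ : \row_k wcoef k z z = 0) ?scaler0 //.
by apply/rowP => k; rewrite !mxE wcoef_out.
Qed.

Hypothesis S_spans : forall l l' : 'I_K, ((l : nat), (l' : nat)) \notin S ->
  ((l' : nat), (l : nat)) \notin S -> wedge_zero (L := L) (E l) (E l').

Lemma pair_image_hom (M : lsa F) (w : lsa_car L -> lsa_car L -> lsa_car M) :
  ext_pairing w -> forall k : 'I_(r + s), lsa_hom M (r <= k)%N (pair_image w k).
Proof.
move=> hw k; have [i [j [e pij _]]] := S_homog k.
by rewrite /pair_image e /= -pij; apply: (pairing_hom hw); apply: hom_ebasis.
Qed.

(* the images of the generators commute: their bracket is a multiple of z /\ z *)
Lemma pair_image_bracket (M : lsa F) (w : lsa_car L -> lsa_car L -> lsa_car M) :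
  ext_pairing w -> forall k k' : 'I_(r + s), lsa_br M (pair_image w k) (pair_image w k') = 0.
Proof.
move=> hw k k'.
have [i [j [e _ _]]] := S_homog k; have [i' [j' [e' _ _]]] := S_homog k'.
rewrite /pair_image e e' /= (pairing_bracket hw (hom_ebasis (i := i)) (hom_ebasis (i := j))
  (hom_ebasis (i := i')) (hom_ebasis (i := j'))).
rewrite /= !br_center (islinearZ (pairing_linl hw _)) (islinearZ (pairing_linr hw _)).
by rewrite (S_spans S_center S_center hw) !scaler0 oppr0.
Qed.

Definition wedge_lift (M : lsa F) (w : lsa_car L -> lsa_car L -> lsa_car M)
  (e : 'rV[F]_(r + s)) : lsa_car M := \sum_(k < r + s) e 0 k *: pair_image w k.

Lemma wedge_lift_morph (M : lsa F) (w : lsa_car L -> lsa_car L -> lsa_car M) :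
  is_lsa M -> ext_pairing w -> lsa_morph (L := A) (wedge_lift w).
Proof.
case=> M0 [Mclosed [_ [_ [Mlinl [Mlinr _]]]]] hw.
have lin : islinear (wedge_lift w).
  move=> c x y; rewrite /wedge_lift scaler_sumr -big_split /=; apply: eq_bigr => k _.
  by rewrite !mxE scalerDl scalerA.
split; [exact: lin | split].
- move=> a e He; rewrite /wedge_lift.
  apply: (big_ind (lsa_hom M a)); first exact: M0.
    by move=> x y hx hy; have := Mclosed a 1 x y hx hy; rewrite scale1r.
  move=> k _; case: (eqVneq ((r <= k)%N) a) => hk.
    by rewrite -[_ *: _]addr0; apply: Mclosed => //; rewrite -hk; apply: pair_image_hom.
  by rewrite He ?hk // scale0r.
- move=> x y; rewrite (_ : lsa_br A x y = 0) // (islinear0 lin) /wedge_lift.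
  rewrite (islinear_sum (f := fun t => lsa_br M t _)); last by move=> c u v; apply: Mlinl.
  rewrite big1 // => k _; rewrite (islinear_sum (f := lsa_br M (pair_image w k))); last first.
    by move=> c u v; apply: Mlinr.
  by rewrite big1 ?scaler0 // => k' _; rewrite pair_image_bracket // scaler0.
Qed.

Lemma wedge_lift_wedge (M : lsa F) (w : lsa_car L -> lsa_car L -> lsa_car M) :
  ext_pairing w -> forall u v, wedge_lift w (wedge u v) = w u v.
Proof.
move=> hw u v; rewrite /wedge_lift.
transitivity (\sum_(k < r + s) \sum_(l < K) \sum_(l' < K)
               (u 0 l * v 0 l') *: (wcoef k l l' *: pair_image w k)).
  apply: eq_bigr => k _; rewrite mxE scaler_suml; apply: eq_bigr => l _.
  by rewrite scaler_suml; apply: eq_bigr => l' _; rewrite scalerA mulrC.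
rewrite exchange_big; under eq_bigr => l _ do rewrite exchange_big.
rewrite (bilinear_expand (pairing_linl hw) (pairing_linr hw) u v).
apply: eq_bigr => l _; apply: eq_bigr => l' _.
by rewrite -scaler_sumr pairing_pair_expand // => *; apply: S_spans.
Qed.

Theorem wedge_ext_square (hF2 : (2%:R : F) != 0) :
  left_bracket_rel wedge -> right_bracket_rel wedge -> ext_square_iso L A.
Proof.
move=> Hleft Hright; apply: (ext_square_of_universal (w := wedge)).
have pw : ext_pairing wedge.
  split; first by move=> c x y v; apply: wedge_linl.
  split; first by move=> c x y v; apply: wedge_linr.
  split; first exact: wedge_hom.
  split; first exact: Hleft.
  split; first exact: Hright.
  split; first by move=> *; rewrite wedge_bracket scaler0 oppr0.
  split; [exact: wedge_anti | exact: wedge_even_diag].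
split=> // M lM w hw; exists (wedge_lift w).
split; first by split; [exact: wedge_lift_morph | exact: wedge_lift_wedge].
move=> g [glin _] gw e; rewrite {2}(row_expand e) (islinear_sum glin).
by apply: eq_bigr => k _; rewrite ebasis_pair_image gw.
Qed.

(* When z occurs in no pair of S, wedge ignores z; as brackets are multiples
   of e_z, both tensor relations reduce to 0 = 0. *)
Section CenterFree.
Hypothesis S_center_free : forall x : nat, ((z : nat), x) \notin S /\ (x, (z : nat)) \notin S.

Lemma wedge_centerl v : wedge (E z) v = 0.
Proof.
apply/rowP => k; rewrite !mxE; apply: big1 => l _; apply: big1 => l' _.
case: (eqVneq l z) => [-> | lz].
  by rewrite wcoef_out ?mul0r //; [exact: (S_center_free _).1 | exact: (S_center_free _).2].
by rewrite ebasis_ne ?mul0r ?mulr0 //; apply: contra lz => /eqP h; apply/eqP/ord_inj.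
Qed.

Lemma wedge_centerr v : wedge v (E z) = 0.
Proof.
apply/rowP => k; rewrite !mxE; apply: big1 => l _; apply: big1 => l' _.
case: (eqVneq l' z) => [-> | lz].
  by rewrite wcoef_out ?mul0r //; [exact: (S_center_free _).2 | exact: (S_center_free _).1].
by rewrite (@ebasis_ne F _ _ l') ?mul0r ?mulr0 //; apply: contra lz => /eqP h; apply/eqP/ord_inj.
Qed.

Lemma wedge_left_center_free : left_bracket_rel wedge.
Proof.
move=> *; rewrite /= !br_center (islinearZ (wedge_linl _)) !(islinearZ (wedge_linr _)).
by rewrite wedge_centerl !wedge_centerr !scaler0 subrr.
Qed.

Lemma wedge_right_center_free : right_bracket_rel wedge.
Proof.
move=> *; rewrite /= !br_center !(islinearZ (wedge_linl _)) (islinearZ (wedge_linr _)).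
by rewrite !wedge_centerl wedge_centerr !scaler0 subrr.
Qed.

End CenterFree.
End CoordinateWedge.

Arguments hom_ebasis {F K} p br i.

Definition pairs_xx (nx : nat) : seq (nat * nat) :=
  [seq (i, j) | j <- iota 0 nx, i <- iota 0 j].
Definition pairs_yy (y0 ny : nat) : seq (nat * nat) :=
  [seq ((y0 + a)%N, (y0 + b)%N) | b <- iota 0 ny, a <- iota 0 b.+1].
Definition pairs_xy (nx y0 ny : nat) : seq (nat * nat) :=
  [seq (i, (y0 + a)%N) | i <- iota 0 nx, a <- iota 0 ny].
Definition heis_pairs (nx y0 ny : nat) : seq (nat * nat) :=
  pairs_xx nx ++ pairs_yy y0 ny ++ pairs_xy nx y0 ny.

Lemma mem_pairs_xx nx i j : ((i, j) \in pairs_xx nx) = (i < j < nx)%N.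
Proof.
apply/allpairsPdep/idP => [[j' [i' [hj hi [-> ->]]]] | H].
  by move: hj hi; rewrite !mem_iota; lia.
by exists j, i; rewrite !mem_iota; split => //; lia.
Qed.

Lemma mem_pairs_yy y0 ny i j :
  ((i, j) \in pairs_yy y0 ny) = (y0 <= i <= j)%N && (j < y0 + ny)%N.
Proof.
apply/allpairsPdep/idP => [[j' [i' [hj hi [-> ->]]]] | H].
  by move: hj hi; rewrite !mem_iota; lia.
exists (j - y0)%N, (i - y0)%N; rewrite !mem_iota; split; try lia.
congr pair; lia.
Qed.

Lemma mem_pairs_xy nx y0 ny i j :
  ((i, j) \in pairs_xy nx y0 ny) = (i < nx)%N && (y0 <= j < y0 + ny)%N.
Proof.
apply/allpairsPdep/idP => [[j' [i' [hj hi [-> ->]]]] | H].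
  by move: hj hi; rewrite !mem_iota; lia.
exists i, (j - y0)%N; rewrite !mem_iota; split; try lia.
congr pair; lia.
Qed.

Lemma mem_heis_pairs nx y0 ny i j : ((i, j) \in heis_pairs nx y0 ny) =
  [|| (i < j < nx)%N, (y0 <= i <= j)%N && (j < y0 + ny)%N
    | (i < nx)%N && (y0 <= j < y0 + ny)%N].
Proof. by rewrite !mem_cat mem_pairs_xx mem_pairs_yy mem_pairs_xy. Qed.

Lemma sumn_iota0 n : sumn (iota 0 n) = 'C(n, 2).
Proof. by rewrite -bin2_sum sumnE /index_iota subn0. Qed.

Lemma size_pairs_xx nx : size (pairs_xx nx) = 'C(nx, 2).
Proof.
rewrite /pairs_xx size_allpairs_dep (eq_map (fun j => size_iota 0 j)) map_id.
exact: sumn_iota0.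
Qed.

Lemma size_pairs_yy y0 ny : size (pairs_yy y0 ny) = 'C(ny.+1, 2).
Proof.
rewrite /pairs_yy size_allpairs_dep (eq_map (fun j => size_iota 0 j.+1)).
rewrite -sumn_iota0 /= -(iotaDl 1 0 ny) /=.
by elim: (iota 0 ny) => //= a l ->.
Qed.

Lemma size_pairs_xy nx y0 ny : size (pairs_xy nx y0 ny) = (nx * ny)%N.
Proof. by rewrite /pairs_xy size_allpairs !size_iota. Qed.

Lemma size_heis_pairs nx y0 ny :
  size (heis_pairs nx y0 ny) = ('C(nx, 2) + 'C(ny.+1, 2) + nx * ny)%N.
Proof. by rewrite /heis_pairs !size_cat size_pairs_xx size_pairs_yy size_pairs_xy addnA. Qed.

Lemma uniq_heis_pairs nx y0 ny : (nx <= y0)%N -> uniq (heis_pairs nx y0 ny).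
Proof.
move=> hxy; rewrite /heis_pairs !cat_uniq.
have -> : uniq (pairs_xx nx).
  apply: allpairs_uniq_dep; [exact: iota_uniq | by move=> *; exact: iota_uniq |].
  by move=> [j1 i1] [j2 i2] _ _ /= [-> ->].
have -> : uniq (pairs_yy y0 ny).
  apply: allpairs_uniq_dep; [exact: iota_uniq | by move=> *; exact: iota_uniq |].
  by move=> [j1 i1] [j2 i2] _ _ /= [/addnI -> /addnI ->].
have -> : uniq (pairs_xy nx y0 ny).
  apply: allpairs_uniq_dep; [exact: iota_uniq | by move=> *; exact: iota_uniq |].
  by move=> [j1 i1] [j2 i2] _ _ /= [-> /addnI ->].
rewrite /= andbT; apply/andP; split; apply/hasPn => [[a b]] /=.
- by rewrite mem_cat mem_pairs_yy mem_pairs_xy mem_pairs_xx; lia.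
- by rewrite mem_pairs_xy mem_pairs_yy; lia.
Qed.

Lemma nth_heis_pairs nx y0 ny k : (k < size (heis_pairs nx y0 ny))%N ->
  let q := nth (0,0)%N (heis_pairs nx y0 ny) k in
  [\/ (k < 'C(nx, 2))%N /\ q \in pairs_xx nx,
      ('C(nx, 2) <= k < 'C(nx, 2) + 'C(ny.+1, 2))%N /\ q \in pairs_yy y0 ny |
      ('C(nx, 2) + 'C(ny.+1, 2) <= k)%N /\ q \in pairs_xy nx y0 ny].
Proof.
rewrite size_heis_pairs => hk /=; rewrite nth_cat size_pairs_xx; case: ltnP => h1.
  by apply: Or31; split => //; apply: mem_nth; rewrite size_pairs_xx.
rewrite nth_cat size_pairs_yy; case: ltnP => h2.
  by apply: Or32; split; [lia | apply: mem_nth; rewrite size_pairs_yy].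
by apply: Or33; split; [lia | apply: mem_nth; rewrite size_pairs_xy; lia].
Qed.

Section HeisenbergType.
Variable F : fieldType.
Variables (K : nat) (p : 'I_K -> bool) (br : 'rV[F]_K -> 'rV[F]_K -> 'rV[F]_K).
Variables (z : 'I_K) (B : 'rV[F]_K -> 'rV[F]_K -> F).
Hypothesis br_center : forall u v, br u v = B u v *: ebasis F K z.

Local Notation L := (coord_lsa p br).
Local Notation E := (ebasis F K).

Lemma center_wedge_zero (a a' v : 'I_K) :
  B (E a) (E a') = 1 -> B (E a') (E v) = 0 -> B (E a) (E v) = 0 ->
  wedge_zero (L := L) (E z) (E v).
Proof.
move=> h1 h2 h3.
have := wedge_zero_bracket (hom_ebasis p br a) (hom_ebasis p br a')
  (hom_ebasis p br v).
by rewrite /= !br_center h1 h2 h3 scale1r !scale0r; apply.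
Qed.

Variables (nx y0 ny r s : nat).
Hypothesis x_before_y : (nx <= y0)%N.
Hypothesis y_in_range : (y0 + ny <= K)%N.
Hypothesis x_even : forall i : 'I_K, (i < nx)%N -> p i = false.
Hypothesis y_odd : forall i : 'I_K, (y0 <= i < y0 + ny)%N -> p i = true.
Hypothesis r_def : r = ('C(nx, 2) + 'C(ny.+1, 2))%N.
Hypothesis s_def : s = (nx * ny)%N.
Hypothesis z_not_y : ~~ ((y0 <= z) && (z < y0 + ny))%N.
Hypothesis center_killed : forall l v : 'I_K,
  ~~ (l < nx)%N -> ~~ ((y0 <= l) && (l < y0 + ny))%N -> wedge_zero (L := L) (E l) (E v).

Local Notation S := (heis_pairs nx y0 ny).
Local Notation wedgeS := (@wedge F K p br r s S).

Lemma heis_size : size S = (r + s)%N.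
Proof. by rewrite size_heis_pairs r_def s_def. Qed.

Lemma heis_homog : forall k : 'I_(r + s), exists i j : 'I_K,
  [/\ nth (0,0)%N S k = ((i : nat), (j : nat)), p i (+) p j = (r <= k)%N
    & ((i : nat) = j -> p i)].
Proof.
move=> k; have hk : (k < size S)%N by rewrite heis_size.
have /= := nth_heis_pairs hk; case: (nth _ _ _) => a b.
rewrite mem_pairs_xx mem_pairs_yy mem_pairs_xy.
case=> [[h1 h2] | [h1 h2] | [h1 h2]]; (have ha : (a < K)%N by lia);
  (have hb : (b < K)%N by lia); exists (Ordinal ha), (Ordinal hb); split => //=.
- by rewrite !x_even //=; lia.
- by lia.
- by rewrite !y_odd //=; lia.
- by move=> _; rewrite y_odd //=; lia.
- by rewrite x_even ?y_odd //=; lia.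
- by lia.
Qed.

Lemma heis_asym : forall i j : nat, i != j -> (i, j) \in S -> (j, i) \notin S.
Proof. by move=> i j; rewrite !mem_heis_pairs; lia. Qed.

Lemma heis_center : ((z : nat), (z : nat)) \notin S.
Proof. by move: z_not_y; rewrite mem_heis_pairs; lia. Qed.

(* a pair outside S involves a generator beyond x and y, or is x_i /\ x_i *)
Lemma heis_spans : forall l l' : 'I_K, ((l : nat), (l' : nat)) \notin S ->
  ((l' : nat), (l : nat)) \notin S -> wedge_zero (L := L) (E l) (E l').
Proof.
move=> l l' H1 H2 M w hw.
case: (boolP ((l < nx)%N || ((y0 <= l) && (l < y0 + ny))%N)) => hl; last first.
  by apply: center_killed => //; move: hl; rewrite negb_or => /andP[].
case: (boolP ((l' < nx)%N || ((y0 <= l') && (l' < y0 + ny))%N)) => hl'; last first.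
  have hk : w (E l') (E l) = 0.
    by apply: center_killed => //; move: hl'; rewrite negb_or => /andP[].
  have := pairing_anti hw (hom_ebasis p br l) (hom_ebasis p br l').
  by rewrite hk scaler0 addr0.
have [<- hlx] : l = l' /\ (l < nx)%N.
  by move: H1 H2 hl hl'; rewrite !mem_heis_pairs => H1 H2 hl hl'; split; [apply: ord_inj|]; lia.
by apply: (pairing_even_diag hw); rewrite -(x_even hlx); apply: hom_ebasis.
Qed.

Hypothesis hF2 : (2%:R : F) != 0.

Theorem heis_ext_square :
  left_bracket_rel wedgeS -> right_bracket_rel wedgeS ->
  ext_square_iso L (Aab F r s).
Proof.
apply: (wedge_ext_square heis_size _ heis_homog heis_asym br_center heis_center
  heis_spans hF2).
exact: uniq_heis_pairs.
Qed.

Corollary heis_ext_square_center_free : ~~ (z < nx)%N -> ext_square_iso L (Aab F r s).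
Proof.
move=> z_not_x.
have free x : ((z : nat), x) \notin S /\ (x, (z : nat)) \notin S.
  by move: z_not_y z_not_x; rewrite !mem_heis_pairs; split; lia.
apply: heis_ext_square.
- exact: (wedge_left_center_free heis_size br_center free).
- exact: (wedge_right_center_free heis_size br_center free).
Qed.

End HeisenbergType.

Section BracketForms.
Variables (F : fieldType) (k : nat).
Local Notation E := (ebasis F k).

Definition symp (m : nat) (u v : 'rV[F]_k) : F :=
  \sum_(i < m) (Defs.coord u i * Defs.coord v (m + i)%N
                - Defs.coord u (m + i)%N * Defs.coord v i).

Definition quad (o n : nat) (u v : 'rV[F]_k) : F :=
  \sum_(j < n) Defs.coord u (o + j)%N * Defs.coord v (o + j)%N.

Lemma natR_false (b : bool) : ~~ b -> (b%:R : F) = 0. Proof. by case: b. Qed.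
Lemma natR_true (b : bool) : b -> (b%:R : F) = 1. Proof. by case: b. Qed.

Lemma coord_ebasis_mul (a b i j : nat) :
  Defs.coord (E a) i * Defs.coord (E b) j = [&& i < k, i == a, j < k & j == b]%N%:R.
Proof. by rewrite !coord_ebasis boolR_mul !andbA. Qed.

Lemma symp_ebasis_zero m (a b : nat) :
  ~~ [|| (a < m) && (b == m + a) | (m <= a < 2 * m) && (a == m + b)]%N ->
  symp m (E a) (E b) = 0.
Proof.
move=> hab; rewrite /symp big1 // => i _.
by rewrite !coord_ebasis_mul !natR_false ?subrr //; move: (ltn_ord i) hab; lia.
Qed.

Lemma symp_ebasis_pair m (i0 : nat) : (i0 < m)%N -> (m + i0 < k)%N ->
  symp m (E i0) (E (m + i0)) = 1.
Proof.
move=> hi0 hk; rewrite /symp (bigD1 (Ordinal hi0)) //= big1 ?addr0 => [|i].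
  by rewrite !coord_ebasis_mul natR_true ?natR_false ?subr0 //; lia.
rewrite -val_eqE /= => hi.
by rewrite !coord_ebasis_mul !natR_false ?subrr //; move: hi; lia.
Qed.

Lemma quad_ebasis_zero o n (a b : nat) :
  ~~ [&& o <= a, a < o + n & b == a]%N -> quad o n (E a) (E b) = 0.
Proof.
move=> hab; rewrite /quad big1 // => j _.
by rewrite coord_ebasis_mul natR_false //; move: (ltn_ord j) hab; lia.
Qed.

Lemma quad_ebasis_diag o n (j0 : nat) : (j0 < n)%N -> (o + j0 < k)%N ->
  quad o n (E (o + j0)) (E (o + j0)) = 1.
Proof.
move=> hj0 hk; rewrite /quad (bigD1 (Ordinal hj0)) //= big1 ?addr0 => [|j].
  by rewrite coord_ebasis_mul natR_true //; lia.
rewrite -val_eqE /= => hj.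
by rewrite coord_ebasis_mul natR_false //; move: hj; lia.
Qed.

End BracketForms.

Lemma Hmn_even_count (m n : nat) :
  (2 * m ^ 2 - m + (n * (n + 1)) %/ 2)%N = ('C(2 * m, 2) + 'C(n.+1, 2))%N.
Proof.
rewrite !bin2 /= -!divn2; congr addn; last by rewrite mulnC addn1.
case: m => [|m'] //=.
rewrite (_ : (2 * m'.+1 * (2 * m'.+1).-1 = (m'.+1 * (2 * m'.+1).-1) * 2)%N); last by lia.
by rewrite mulnK //; lia.
Qed.

Lemma Hm_even_count (m : nat) : (m ^ 2)%N = ('C(m, 2) + 'C(m.+1, 2))%N.
Proof.
have h : ('C(m, 2) * 2 = m * m.-1)%N.
  by rewrite (_ : 2 = 2`!)%N // bin_ffact ffactnS ffactn1.
rewrite binS bin1; nia.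
Qed.

(* H(m,n) for m + n >= 2: here z = [x_i, x_{m+i}] = [y_j, y_j] always has a
   representative commuting with any given basis vector, so z /\ L = 0 and
   L /\ L is spanned by x_i /\ x_j (i < j), y_a /\ y_b (a <= b), x_i /\ y_b. *)
Section HeisenbergHmn.
Variables (F : fieldType) (m n : nat).
Local Notation K := (2 * m + 1 + n)%N.
Local Notation E := (ebasis F K).

Definition Hmn_form (u v : 'rV[F]_K) : F := symp m u v + quad (2 * m + 1) n u v.

Lemma Hmn_center_lt : (2 * m < K)%N. Proof. lia. Qed.
Local Notation z := (Ordinal Hmn_center_lt).

Lemma Hmn_br_center u v : lsa_br (Hmn F m n) u v = Hmn_form u v *: E z.
Proof. by []. Qed.

Lemma Hmn_form_zero (a b : nat) :
  ~~ [|| (a < m) && (b == m + a), (m <= a < 2 * m) && (a == m + b)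
       | (2 * m < a) && (b == a)]%N ->
  Hmn_form (E a) (E b) = 0.
Proof.
by move=> hab; rewrite /Hmn_form symp_ebasis_zero ?quad_ebasis_zero ?addr0 //; move: hab; lia.
Qed.

Lemma Hmn_form_x (a b : nat) : (a < m)%N -> b = (m + a)%N -> Hmn_form (E a) (E b) = 1.
Proof.
by move=> ha ->; rewrite /Hmn_form symp_ebasis_pair ?quad_ebasis_zero ?addr0 //; lia.
Qed.

Lemma Hmn_form_y (a : nat) : (2 * m < a < K)%N -> Hmn_form (E a) (E a) = 1.
Proof.
move=> ha; rewrite /Hmn_form symp_ebasis_zero ?add0r; last lia.
by rewrite -(subnKC (_ : 2 * m + 1 <= a)%N) ?quad_ebasis_diag ?subnKC //; lia.
Qed.

Hypothesis hmn : (2 <= m + n)%N.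

(* z /\ e_v = 0: write z as [y_1,y_1], [x_1,x_{m+1}], [x_2,x_{m+2}] or
   [y_2,y_2], whichever pair commutes with e_v *)
Lemma Hmn_center_killed (v : 'I_K) : wedge_zero (L := Hmn F m n) (E z) (E v).
Proof.
have kill (a a' : nat) (ha : (a < K)%N) (ha' : (a' < K)%N) :
    Hmn_form (E a) (E a') = 1 -> Hmn_form (E a') (E v) = 0 -> Hmn_form (E a) (E v) = 0 ->
    wedge_zero (L := Hmn F m n) (E z) (E v).
  exact: (center_wedge_zero Hmn_br_center (a := Ordinal ha) (a' := Ordinal ha')).
have [y1 | not_y1] := boolP ((0 < n)%N && (v != 2 * m + 1 :> nat)).
  have ha : (2 * m + 1 < K)%N by lia.
  by apply: (kill _ _ ha ha); [apply: Hmn_form_y | apply: Hmn_form_zero..]; lia.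
have [x1 | not_x1] := boolP ((0 < m)%N && (v != 0 :> nat) && (v != m :> nat)).
  have ha : (0 < K)%N by lia. have ha' : (m < K)%N by lia.
  by apply: (kill _ _ ha ha'); [apply: Hmn_form_x; lia | apply: Hmn_form_zero..]; lia.
have [x2 | not_x2] := boolP (1 < m)%N.
  have ha : (1 < K)%N by lia. have ha' : (m + 1 < K)%N by lia.
  by apply: (kill _ _ ha ha'); [apply: Hmn_form_x; lia | apply: Hmn_form_zero..]; lia.
have ha : (2 * m + 2 < K)%N by lia.
by apply: (kill _ _ ha ha); [apply: Hmn_form_y | apply: Hmn_form_zero..]; lia.
Qed.

Hypothesis hF2 : (2%:R : F) != 0.

Theorem Hmn_ext_square :
  ext_square_iso (Hmn F m n) (Aab F (2 * m ^ 2 - m + (n * (n + 1)) %/ 2) (2 * m * n)).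
Proof.
apply: (@heis_ext_square_center_free F K (fun i : 'I_K => (2 * m < i)%N)
  (lsa_br (Hmn F m n)) z Hmn_form Hmn_br_center (2 * m) (2 * m + 1) n _ _
  _ _ _ _ _ _ _ _ hF2).
- by lia.
- by lia.
- by move=> i /= hi; lia.
- by move=> i /= hi; lia.
- exact: Hmn_even_count.
- by [].
- by rewrite /=; lia.
- move=> l v hx hy; have -> : l = z by apply: ord_inj; move: (ltn_ord l) hx hy => /=; lia.
  exact: Hmn_center_killed.
- by rewrite /=; lia.
Qed.

End HeisenbergHmn.

(* H_m for m >= 2: z = [x_1,y_1] = [x_2,y_2] is again killed, and L /\ L is
   spanned by x_i /\ x_j (i < j), y_a /\ y_b (a <= b) and x_i /\ y_b. *)
Section HeisenbergHm.
Variables (F : fieldType) (m : nat).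
Local Notation K := (2 * m + 1)%N.
Local Notation E := (ebasis F K).

Lemma Hm_center_lt : (2 * m < K)%N. Proof. lia. Qed.
Local Notation z := (Ordinal Hm_center_lt).

Lemma Hm_br_center u v : lsa_br (Hm F m) u v = symp m u v *: E z.
Proof. by []. Qed.

Hypothesis hm : (2 <= m)%N.

(* z /\ e_v = 0: write z as [x_1,y_1] or [x_2,y_2] *)
Lemma Hm_center_killed (v : 'I_K) : wedge_zero (L := Hm F m) (E z) (E v).
Proof.
have kill (a : nat) (ha : (a < m)%N) :
    symp m (E (m + a)) (E v) = 0 -> symp m (E a) (E v) = 0 ->
    wedge_zero (L := Hm F m) (E z) (E v).
  have ha1 : (a < K)%N by lia. have ha2 : (m + a < K)%N by lia.
  apply: (center_wedge_zero Hm_br_center (a := Ordinal ha1) (a' := Ordinal ha2)).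
  by rewrite /= symp_ebasis_pair //; lia.
have [v_not_01 | v_01] := boolP ((v != 0 :> nat) && (v != m :> nat)).
  by apply: (kill 0); rewrite ?symp_ebasis_zero //; lia.
by apply: (kill 1); rewrite ?symp_ebasis_zero //; lia.
Qed.

Hypothesis hF2 : (2%:R : F) != 0.

Theorem Hm_ext_square : ext_square_iso (Hm F m) (Aab F (m ^ 2) (m ^ 2)).
Proof.
apply: (@heis_ext_square_center_free F K (fun i : 'I_K => (m <= i)%N)
  (lsa_br (Hm F m)) z (symp m) Hm_br_center m m m _ _ _ _ _ _ _ _ _ _ hF2).
- by lia.
- by lia.
- by move=> i /= hi; lia.
- by move=> i /= hi; lia.
- exact: Hm_even_count.
- by rewrite expnS expn1.
- by rewrite /=; lia.
- move=> l v hx hy; have -> : l = z by apply: ord_inj; move: (ltn_ord l) hx hy => /=; lia.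
  exact: Hm_center_killed.
- by rewrite /=; lia.
Qed.

End HeisenbergHm.

Section ThreeDim.
Variable F : fieldType.

Definition o0 : 'I_3 := @Ordinal 3 0 isT.
Definition o1 : 'I_3 := @Ordinal 3 1 isT.
Definition o2 : 'I_3 := @Ordinal 3 2 isT.

Lemma sum_ord3 (g : 'I_3 -> F) : \sum_(i < 3) g i = g o0 + g o1 + g o2.
Proof.
rewrite (bigD1 o0) //= (bigD1 o1) //= (bigD1 o2) //= big_pred0 ?addr0 ?addrA //.
by case=> [[|[|[|i]]] hi].
Qed.

Lemma coord3_0 (x : 'rV[F]_3) : Defs.coord x 0 = x 0 o0. Proof. exact: coordE. Qed.
Lemma coord3_1 (x : 'rV[F]_3) : Defs.coord x 1 = x 0 o1. Proof. exact: coordE. Qed.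
Lemma coord3_2 (x : 'rV[F]_3) : Defs.coord x 2 = x 0 o2. Proof. exact: coordE. Qed.

End ThreeDim.

Ltac expand3 :=
  rewrite /wedge /= !mxE !sum_ord3 ?big_ord1 ?big_ord0 /=
          ?coord3_0 ?coord3_1 ?coord3_2 ?mxE ?ebasisE /=.

Ltac zero_coords h :=
  try rewrite (h o0 isT); try rewrite (h o1 isT); try rewrite (h o2 isT).

Ltac solve_relation3 a ha b hb c hc :=
  apply/rowP; case=> [[|[|[|?]]] ?] //; expand3;
  case: a ha => ha; zero_coords ha; case: b hb => hb; zero_coords hb;
  case: c hc => hc; zero_coords hc; rewrite /wcoef /= ?sgnF ?sgnT; ring.

(* H(1,0): z = [x_1,x_2] is even and survives in x_i /\ z; L /\ L = A(3|0) *)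
Section H10.
Variables (F : fieldType) (hF2 : (2%:R : F) != 0).
Local Notation K := (2 * 1 + 1 + 0)%N.
Local Notation p := (fun i : 'I_K => (2 * 1 < i)%N).
Local Notation w := (@wedge F K p (lsa_br (Hmn F 1 0)) 3 0 (heis_pairs 3 3 0)).

Lemma H10_left : left_bracket_rel w.
Proof. move=> a a' b x x' y hx hx' hy; solve_relation3 a hx a' hx' b hy. Qed.

Lemma H10_right : right_bracket_rel w.
Proof. move=> a b b' x y y' hx hy hy'; solve_relation3 a hx b hy b' hy'. Qed.

(* all three generators are treated as even "x"; no y *)
Theorem H10_ext_square : ext_square_iso (Hmn F 1 0) (Aab F 3 0).
Proof.
apply: (@heis_ext_square F K p (lsa_br (Hmn F 1 0)) _ _ (@Hmn_br_center F 1 0) 3 3 0 3 0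
  _ _ _ _ _ _ _ _ hF2 H10_left H10_right) => //.
- by move=> i /= hi; lia.
- by move=> i /= hi; lia.
- by move=> l v /negP[]; exact: ltn_ord.
Qed.

End H10.

(* H(0,1): z = [y,y] and z /\ y = 0 because 3 (z /\ y) = 0 *)
Section H01.
Variables (F : fieldType) (hF2 : (2%:R : F) != 0) (hF3 : (3%:R : F) != 0).
Local Notation K := (2 * 0 + 1 + 1)%N.
Local Notation E := (ebasis F K).
Local Notation p := (fun i : 'I_K => (2 * 0 < i)%N).
Local Notation oz := (@Ordinal K 0 isT).
Local Notation oy := (@Ordinal K 1 isT).

Lemma H01_center_killed (v : 'I_K) : wedge_zero (L := Hmn F 0 1) (E 0) (E v).
Proof.
move=> M w hw; case: v => [[|[|v]] hv] //=.
  by apply: (pairing_even_diag hw); exact: (hom_ebasis p _ oz).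
have hy := hom_ebasis p (lsa_br (Hmn F 0 1)) oy.
have hz := hom_ebasis p (lsa_br (Hmn F 0 1)) oz.
have yy : lsa_br (Hmn F 0 1) (E 1) (E 1) = E 0.
  by rewrite Hmn_br_center (@Hmn_form_y F 0 1 1) ?scale1r.
(* first tensor relation for (y,y,y): z /\ y = 2 (y /\ z) = -2 (z /\ y) *)
have := pairing_left hw hy hy hy; rewrite yy sgnT scaleN1r opprK.
move/eqP: (pairing_anti hw hy hz); rewrite sgnF scale1r addr_eq0 => /eqP ->.
set X := w (E 0) (E 1) => hX.
have /eqP : (3%:R : F) *: X = 0.
  by rewrite scaler_nat !mulrS mulr0n addr0; apply/eqP; rewrite addr_eq0 opprD -hX.
by rewrite scaler_eq0 (negbTE hF3) => /eqP.
Qed.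

Theorem H01_ext_square : ext_square_iso (Hmn F 0 1) (Aab F 1 0).
Proof.
apply: (@heis_ext_square_center_free F K p (lsa_br (Hmn F 0 1)) _ _ (@Hmn_br_center F 0 1)
  0 1 1 1 0 _ _ _ _ _ _ _ _ hF2) => //.
- by move=> i /= hi; lia.
- move=> l v hx hy; rewrite (_ : (l : nat) = 0%N); last by move: (ltn_ord l) hy => /=; lia.
  exact: H01_center_killed.
Qed.

End H01.

(* H_1: z = [x,y] is odd; y /\ z = 0 (this uses char <> 2) but x /\ z
   survives, so L /\ L = A(1|2) with basis y /\ y, x /\ y, x /\ z *)
Section H1.
Variables (F : fieldType) (hF2 : (2%:R : F) != 0).
Local Notation K := (2 * 1 + 1)%N.
Local Notation E := (ebasis F K).
Local Notation p := (fun i : 'I_K => (1 <= i)%N).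
Local Notation L := (Hm F 1).
Local Notation S := [:: (1, 1); (0, 1); (0, 2)]%N.
Local Notation w := (@wedge F K p (lsa_br L) 1 2 S).
Local Notation ox := (@Ordinal K 0 isT).
Local Notation oy := (@Ordinal K 1 isT).
Local Notation oz := (@Ordinal K 2 isT).

Lemma H1_left : left_bracket_rel w.
Proof. move=> a a' b x x' y hx hx' hy; solve_relation3 a hx a' hx' b hy. Qed.

Lemma H1_right : right_bracket_rel w.
Proof. move=> a b b' x y y' hx hy hy'; solve_relation3 a hx b hy b' hy'. Qed.

Lemma H1_xy : lsa_br L (E 0) (E 1) = E 2.
Proof. by rewrite Hm_br_center (@symp_ebasis_pair F K 1 0) ?scale1r. Qed.

Lemma H1_yy : lsa_br L (E 1) (E 1) = 0.
Proof. by rewrite Hm_br_center symp_ebasis_zero ?scale0r. Qed.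

(* the second tensor relation for (y, x, y) gives y /\ z = - z /\ y = - y /\ z *)
Lemma H1_yz : wedge_zero (L := L) (E 1) (E 2).
Proof.
move=> M w' hw.
have hx : lsa_hom L false (E 0) := hom_ebasis p _ ox.
have hy : lsa_hom L true (E 1) := hom_ebasis p _ oy.
have hz : lsa_hom L true (E 2) := hom_ebasis p _ oz.
have := pairing_right hw hy hx hy.
rewrite H1_xy H1_yy (islinear0 (pairing_linl hw _)) scaler0 sub0r sgnF scale1r.
move/eqP: (pairing_anti hw hz hy); rewrite sgnT scaleN1r subr_eq0 => /eqP -> h.
have /eqP : (2%:R : F) *: w' (E 1) (E 2) = 0 by rewrite scaler_nat mulr2n {1}h addNr.
by rewrite scaler_eq0 (negbTE hF2) => /eqP.
Qed.

Lemma H1_spans : forall l l' : 'I_K, ((l : nat), (l' : nat)) \notin S ->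
  ((l' : nat), (l : nat)) \notin S -> wedge_zero (L := L) (E l) (E l').
Proof.
move=> [[|[|[|l]]] hl] [[|[|[|l']]] hl'] //= _ _.
- by move=> M w' hw; apply: (pairing_even_diag hw); exact: (hom_ebasis p _ ox).
- exact: H1_yz.
- move=> M w' hw; have := pairing_anti hw (hom_ebasis p _ oz) (hom_ebasis p _ oy).
  by rewrite (H1_yz hw) scaler0 addr0.
- rewrite -{1}H1_xy; apply: (wedge_zero_bracket (hom_ebasis p _ ox) (hom_ebasis p _ oy)
    (hom_ebasis p _ oz)); by rewrite Hm_br_center symp_ebasis_zero ?scale0r.
Qed.

Theorem H1_ext_square : ext_square_iso L (Aab F 1 2).
Proof.
apply: (@wedge_ext_square F K p (lsa_br L) 1 2 S _ _ _ _ _ _ (@Hm_br_center F 1) _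
  H1_spans hF2 H1_left H1_right) => //.
- case=> [[|[|[|k]]] hk] //.
  + by exists oy, oy; split.
  + by exists ox, oy; split.
  + by exists ox, oz; split.
- move=> i j ij; rewrite !inE => /or3P [] /eqP [hi hj]; by move: ij; rewrite hi hj.
Qed.

End H1.

Unset Implicit Arguments.

Theorem mainTheorem17 (F : fieldType)
  (hF2 : (2%:R : F) != 0) (hF3 : (3%:R : F) != 0) :
  ext_square_iso (Hmn F 1 0) (Aab F 3 0) /\
  ext_square_iso (Hmn F 0 1) (Aab F 1 0) /\
  (forall m n : nat, (2 <= m + n)%N ->
     ext_square_iso (Hmn F m n)
       (Aab F (2 * m ^ 2 - m + (n * (n + 1)) %/ 2) (2 * m * n))) /\
  ext_square_iso (Hm F 1) (Aab F 1 2) /\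
  (forall m : nat, (2 <= m)%N -> ext_square_iso (Hm F m) (Aab F (m ^ 2) (m ^ 2))).
Proof.
split; first exact: H10_ext_square hF2.
split; first exact: H01_ext_square hF2 hF3.
split; first by move=> m n hmn; exact: Hmn_ext_square hmn hF2.
split; first exact: H1_ext_square hF2.
by move=> m hm; exact: Hm_ext_square hm hF2.
Qed.
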